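(* For every monotone submodular $f:2^{[2]}\to\mathbb{R}_+$ and every $\mathbf{x}\in[0,1]^2$, $f^{+}(\mathbf{x})/f^{++}(\mathbf{x})\le 4/3$ (with the convention $0/0=1$).
   Context: $[n]=\{1,\dots,n\}$. A set function $f:2^{[n]}\to\mathbb{R}_+$ is monotone if $f(S)\le f(T)$ for $S\subseteq T$, submodular if $f(S)+f(T)\ge f(S\cap T)+f(S\cup T)$. For $\mathbf{x}\in[0,1]^n$: the concave closure $f^{+}(\mathbf{x})=\max\sum_{S\subseteq[n]}\theta(S)f(S)$ over $\theta:2^{[n]}\to\mathbb{R}_{\ge0}$ with $\sum_S\theta(S)=1$ and $\sum_{S\ni i}\theta(S)=x_i$ for all $i$; the upper pairwise independent extension $f^{++}(\mathbf{x})$ is the same maximum with the additional constraints $\sum_{S\ni i,j}\theta(S)=x_ix_j$ for all $i<j$. *)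

From mathcomp Require Import all_boot all_order all_algebra.
From mathcomp Require Import classical_sets reals.
Set Implicit Arguments. Unset Strict Implicit. Unset Printing Implicit Defensive.
Import Order.TTheory GRing.Theory Num.Theory.
Local Open Scope ring_scope.
Local Open Scope classical_set_scope.

Section Defs.
Variables (R : realType) (n : nat).

Definition nonneg_setfun (f : {set 'I_n} -> R) : Prop :=
  forall S, 0 <= f S.

Definition monotone_setfun (f : {set 'I_n} -> R) : Prop :=
  forall S T : {set 'I_n}, S \subset T -> f S <= f T.

Definition submodular (f : {set 'I_n} -> R) : Prop :=
  forall S T : {set 'I_n}, f (S :&: T) + f (S :|: T) <= f S + f T.

Definition concave_feasible (x : 'I_n -> R) (th : {set 'I_n} -> R) : Prop :=
  (forall S, 0 <= th S) /\
  \sum_(S : {set 'I_n}) th S = 1 /\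
  (forall i : 'I_n, \sum_(S : {set 'I_n} | i \in S) th S = x i).

Definition pairwise_feasible (x : 'I_n -> R) (th : {set 'I_n} -> R) : Prop :=
  concave_feasible x th /\
  (forall i j : 'I_n, (i < j)%N ->
     \sum_(S : {set 'I_n} | (i \in S) && (j \in S)) th S = x i * x j).

Definition objective (f : {set 'I_n} -> R) (th : {set 'I_n} -> R) : R :=
  \sum_(S : {set 'I_n}) th S * f S.

(* concave closure f^+(x): the maximum (= supremum, the feasible set being a
   nonempty compact polytope) of the objective over concave_feasible x *)
Definition concave_closure (f : {set 'I_n} -> R) (x : 'I_n -> R) : R :=
  sup [set objective f th | th in concave_feasible x].

Definition upper_pairwise_ext (f : {set 'I_n} -> R) (x : 'I_n -> R) : R :=
  sup [set objective f th | th in pairwise_feasible x].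

End Defs.

From mathcomp Require Import all_boot all_order all_algebra.
From mathcomp Require Import classical_sets reals.
From mathcomp Require Import ring lra.
Set Implicit Arguments. Unset Strict Implicit. Unset Printing Implicit Defensive.
Import Order.TTheory GRing.Theory Num.Theory.
Local Open Scope ring_scope.

(* On the ground set {0, 1} a distribution with marginals p, q is determined by
   the mass t it puts on {0, 1}, and t ranges over the Frechet interval
   [max(0, p + q - 1), min(p, q)]. The objective is affine in t with slope minus
   the submodularity gap f{0} + f{1} - f{} - f{0,1} >= 0, so f^+ is attained at
   the lower Frechet bound, while pairwise independence forces t = p q for f^++.
   The ratio bound is then a polynomial inequality in p, q and the four values
   of f, with an explicit sum-of-products certificate. *)

Lemma sup_eq_max (R : realType) (E : set R) (m : R) :
  E m -> (forall y, E y -> y <= m) -> sup E = m.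
Proof.
move=> Em ubm; apply/le_anti/andP; split; first by apply: ge_sup; [exists m |].
by apply: (sup_upper_bound _ Em); split; exists m.
Qed.

Lemma objective_ge0 (R : realType) (n : nat) (f th : {set 'I_n} -> R) :
  nonneg_setfun f -> (forall S, 0 <= th S) -> 0 <= objective f th.
Proof. by move=> f0 th0; apply: sumr_ge0 => S _; apply: mulr_ge0. Qed.

Lemma ord2_cases (i : 'I_2) : i = ord0 \/ i = ord_max.
Proof. by case: i => -[|[|//]] i2; [left | right]; apply: val_inj. Qed.

Lemma eq_setI2 (S T : {set 'I_2}) :
  (S == T) = ((ord0 \in S) == (ord0 \in T)) && ((ord_max \in S) == (ord_max \in T)).
Proof.
apply/eqP/andP => [-> // | [/eqP S0 /eqP S1]].
by apply/setP => i; case: (ord2_cases i) => ->.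
Qed.

Lemma enum_setI2 :
  perm_eq (enum {set 'I_2}) [:: finset.set0; [set ord0]; [set ord_max]; [set: 'I_2]].
Proof.
apply: uniq_perm; first exact: enum_uniq.
  by rewrite /= !inE !eq_setI2 !inE.
move=> S; rewrite mem_enum !inE !eq_setI2 !inE.
by case: (ord0 \in S); case: (ord_max \in S).
Qed.

Lemma big_setI2 (V : nmodType) (g : {set 'I_2} -> V) :
  \sum_S g S = g finset.set0 + g [set ord0] + g [set ord_max] + g [set: 'I_2].
Proof.
by rewrite -big_enum (perm_big _ enum_setI2) !big_cons big_nil /= addr0 !addrA.
Qed.

Lemma setI2_cases (S : {set 'I_2}) :
  [\/ S = finset.set0, S = [set ord0], S = [set ord_max] | S = [set: 'I_2]].
Proof.
have : S \in [:: finset.set0; [set ord0]; [set ord_max]; [set: 'I_2]].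
  by rewrite -(perm_mem enum_setI2) mem_enum.
by rewrite !inE => /or4P[] /eqP ->;
  [constructor 1 | constructor 2 | constructor 3 | constructor 4].
Qed.

Lemma big_setI2_cond (V : nmodType) (P : pred {set 'I_2}) (g : {set 'I_2} -> V) :
  \sum_(S | P S) g S = (if P finset.set0 then g finset.set0 else 0)
    + (if P [set ord0] then g [set ord0] else 0)
    + (if P [set ord_max] then g [set ord_max] else 0)
    + (if P [set: 'I_2] then g [set: 'I_2] else 0).
Proof. by rewrite big_mkcond big_setI2. Qed.

Lemma submodular_setI2 (R : realType) (f : {set 'I_2} -> R) : submodular f ->
  f finset.set0 + f [set: 'I_2] <= f [set ord0] + f [set ord_max].
Proof.
move=> /(_ [set ord0] [set ord_max]).
have -> : [set ord0] :&: [set ord_max] = finset.set0 :> {set 'I_2}.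
  by apply/eqP; rewrite eq_setI2 !inE.
have -> : [set ord0] :|: [set ord_max] = [set: 'I_2].
  by apply/eqP; rewrite eq_setI2 !inE.
exact.
Qed.

Section Coupling.
Variable R : realType.

Definition coupling2 (p q t : R) (S : {set 'I_2}) : R :=
  if ord0 \in S then (if ord_max \in S then t else p - t)
  else (if ord_max \in S then q - t else 1 - p - q + t).

Lemma coupling2E (p q t : R) :
  [/\ coupling2 p q t finset.set0 = 1 - p - q + t, coupling2 p q t [set ord0] = p - t,
      coupling2 p q t [set ord_max] = q - t & coupling2 p q t [set: 'I_2] = t].
Proof. by rewrite /coupling2 !inE. Qed.

Lemma concave_feasible_coupling2 (x : 'I_2 -> R) (t : R) :
  Num.max 0 (x ord0 + x ord_max - 1) <= t <= Num.min (x ord0) (x ord_max) ->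
  concave_feasible x (coupling2 (x ord0) (x ord_max) t).
Proof.
rewrite ge_max le_min => /andP[/andP[t_ge0 t_ge] /andP[t_lep t_leq]].
split; [|split].
- by move=> S; rewrite /coupling2; case: (ord0 \in S); case: (ord_max \in S); lra.
- by rewrite big_setI2; have [-> -> -> ->] := coupling2E (x ord0) (x ord_max) t; lra.
- move=> i; rewrite big_setI2_cond.
  have [-> -> -> ->] := coupling2E (x ord0) (x ord_max) t.
  by case: (ord2_cases i) => ->; rewrite !inE /=; lra.
Qed.

Lemma concave_feasible_setI2 (x : 'I_2 -> R) (th : {set 'I_2} -> R) :
  concave_feasible x th ->
  [/\ th finset.set0 + th [set ord0] + th [set ord_max] + th [set: 'I_2] = 1,
      th [set ord0] + th [set: 'I_2] = x ord0 &
      th [set ord_max] + th [set: 'I_2] = x ord_max].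
Proof.
move=> [_ [th1 thx]]; move: th1 (thx ord0) (thx ord_max).
by rewrite big_setI2 !big_setI2_cond !inE /= !add0r addr0 => -> -> ->.
Qed.

Lemma concave_feasible_coupling2E (x : 'I_2 -> R) (th : {set 'I_2} -> R) :
  concave_feasible x th -> th =1 coupling2 (x ord0) (x ord_max) (th [set: 'I_2]).
Proof.
move=> thF S; have [th1 thx0 thx1] := concave_feasible_setI2 thF.
by case: (setI2_cases S) => ->; rewrite /coupling2 !inE /=; lra.
Qed.

Lemma concave_feasible_frechet (x : 'I_2 -> R) (th : {set 'I_2} -> R) :
  concave_feasible x th ->
  Num.max 0 (x ord0 + x ord_max - 1) <= th [set: 'I_2] <= Num.min (x ord0) (x ord_max).
Proof.
move=> thF; have [th1 thx0 thx1] := concave_feasible_setI2 thF.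
have [th_ge0 _] := thF; have := th_ge0 finset.set0; have := th_ge0 [set ord0].
have := th_ge0 [set ord_max]; have := th_ge0 [set: 'I_2].
by rewrite ge_max le_min => *; apply/andP; split; apply/andP; split; lra.
Qed.

Lemma pairwise_feasibleE (x : 'I_2 -> R) (th : {set 'I_2} -> R) :
  pairwise_feasible x th <->
  concave_feasible x th /\ th [set: 'I_2] = x ord0 * x ord_max.
Proof.
split=> [[thF /(_ ord0 ord_max isT)] | [thF thT]].
  by rewrite big_setI2_cond !inE /= !add0r.
split=> // i j; case: (ord2_cases i) => ->; case: (ord2_cases j) => -> // _.
by rewrite big_setI2_cond !inE /= !add0r.
Qed.

Lemma frechet_mul (p q : R) : 0 <= p <= 1 -> 0 <= q <= 1 ->
  Num.max 0 (p + q - 1) <= p * q <= Num.min p q.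
Proof.
move=> /andP[p_ge0 p_le1] /andP[q_ge0 q_le1].
by rewrite ge_max le_min; apply/andP; split; apply/andP; split; nra.
Qed.

Lemma objective_coupling2 (f : {set 'I_2} -> R) (p q t : R) :
  objective f (coupling2 p q t) =
  (1 - p - q) * f finset.set0 + p * f [set ord0] + q * f [set ord_max]
  - t * (f [set ord0] + f [set ord_max] - f finset.set0 - f [set: 'I_2]).
Proof. by rewrite /objective big_setI2; have [-> -> -> ->] := coupling2E p q t; ring. Qed.

Lemma objective_coupling2_antitone (f : {set 'I_2} -> R) (p q t t' : R) :
  submodular f -> t <= t' ->
  objective f (coupling2 p q t') <= objective f (coupling2 p q t).
Proof.
move=> /submodular_setI2 fsub le_tt'; rewrite !objective_coupling2 lerD2l lerN2.
by apply: ler_wpM2r; lra.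
Qed.

Lemma objective_concave_feasible (f : {set 'I_2} -> R) (x : 'I_2 -> R) th :
  concave_feasible x th ->
  objective f th = objective f (coupling2 (x ord0) (x ord_max) (th [set: 'I_2])).
Proof.
by move=> thF; apply: eq_bigr => S _; rewrite (concave_feasible_coupling2E thF).
Qed.

Lemma upper_pairwise_ext_setI2 (f : {set 'I_2} -> R) (x : 'I_2 -> R) :
  (forall i, 0 <= x i <= 1) ->
  upper_pairwise_ext f x =
  objective f (coupling2 (x ord0) (x ord_max) (x ord0 * x ord_max)).
Proof.
move=> x01; apply: sup_eq_max.
  exists (coupling2 (x ord0) (x ord_max) (x ord0 * x ord_max)) => //.
  apply/pairwise_feasibleE; split; last by rewrite /coupling2 !inE.
  exact/concave_feasible_coupling2/frechet_mul.
move=> _ [th /pairwise_feasibleE[thF thT] <-].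
by rewrite (objective_concave_feasible f thF) thT.
Qed.

Lemma concave_closure_setI2 (f : {set 'I_2} -> R) (x : 'I_2 -> R) :
  submodular f -> (forall i, 0 <= x i <= 1) ->
  concave_closure f x =
  objective f (coupling2 (x ord0) (x ord_max) (Num.max 0 (x ord0 + x ord_max - 1))).
Proof.
move=> fsub x01; apply: sup_eq_max.
  exists (coupling2 (x ord0) (x ord_max) (Num.max 0 (x ord0 + x ord_max - 1))) => //.
  apply: concave_feasible_coupling2; rewrite lexx /=.
  by have /andP[] := frechet_mul (x01 ord0) (x01 ord_max); apply: le_trans.
move=> _ [th thF <-]; rewrite (objective_concave_feasible f thF).
apply: objective_coupling2_antitone => //.
by have /andP[] := concave_feasible_frechet thF.
Qed.

Lemma objective_coupling2_ratio (f : {set 'I_2} -> R) (p q : R) :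
  nonneg_setfun f -> monotone_setfun f -> submodular f ->
  0 <= p <= 1 -> 0 <= q <= 1 ->
  3 * objective f (coupling2 p q (Num.max 0 (p + q - 1)))
    <= 4 * objective f (coupling2 p q (p * q)).
Proof.
move=> f_ge0 fmono /submodular_setI2 fsub /andP[p_ge0 p_le1] /andP[q_ge0 q_le1].
rewrite !objective_coupling2.
have f0_ge0 := f_ge0 finset.set0.
have f1_le : f [set ord0] <= f [set: 'I_2] by apply: fmono; exact: finset.subsetT.
have f2_le : f [set ord_max] <= f [set: 'I_2] by apply: fmono; exact: finset.subsetT.
set D := _ - f [set: 'I_2]; have D_ge0 : 0 <= D by rewrite /D; lra.
have d1_p : 0 <= (f [set: 'I_2] - f [set ord_max]) * p by apply: mulr_ge0; lra.
have d2_q : 0 <= (f [set: 'I_2] - f [set ord0]) * q by apply: mulr_ge0; lra.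
have D_sqr := mulr_ge0 D_ge0 (sqr_ge0 (p - q)).
(* 4 F - 3 V = f{} + p (f{0,1} - f{1}) + q (f{0,1} - f{0}) + D (p - q)^2 + D r,
   where r = (p + q) (1 - (p + q)) if p + q <= 1 and r = 1 - (2 - p - q)^2 else. *)
case: (lerP (p + q) 1) => [s_le1 | s_gt1].
  rewrite max_l; last by lra.
  have D_s : 0 <= D * ((p + q) * (1 - (p + q))) by apply/mulr_ge0/mulr_ge0; lra.
  rewrite /D in D_ge0 D_sqr D_s *; lra.
rewrite max_r; last by lra.
have D_s : 0 <= D * (1 - (2 - p - q) ^+ 2) by apply: mulr_ge0; nra.
rewrite /D in D_ge0 D_sqr D_s *; lra.
Qed.

End Coupling.

Theorem mainTheorem4 (R : realType) (f : {set 'I_2} -> R) (x : 'I_2 -> R) :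
  nonneg_setfun f -> monotone_setfun f -> submodular f ->
  (forall i, 0 <= x i <= 1) ->
  (upper_pairwise_ext f x = 0 -> concave_closure f x = 0) /\
  (upper_pairwise_ext f x != 0 ->
     concave_closure f x / upper_pairwise_ext f x <= 4 / 3).
Proof.
move=> f_ge0 fmono fsub x01.
have ratio := objective_coupling2_ratio f_ge0 fmono fsub (x01 ord0) (x01 ord_max).
have /andP[t0_le _] := frechet_mul (x01 ord0) (x01 ord_max).
have F_ge0 : 0 <= objective f (coupling2 (x ord0) (x ord_max) (x ord0 * x ord_max)).
  apply: objective_ge0 => //.
  by have [] := concave_feasible_coupling2 (frechet_mul (x01 ord0) (x01 ord_max)).
have F_le_V := objective_coupling2_antitone (x ord0) (x ord_max) fsub t0_le.
rewrite (upper_pairwise_ext_setI2 f x01) (concave_closure_setI2 fsub x01).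
split=> [F0 | F_neq0]; first lra.
by rewrite ler_pdivrMr ?lt_def ?F_neq0 ?F_ge0 //; lra.
Qed.
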